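(* Let $t\in\mathbb{R}^K$ be fixed and let $\Lambda\subseteq\mathbb{R}^K\setminus\{0\}$ be an arbitrary (possibly infinite) set. For $\lambda\in\Lambda$ and $\varrho\in\mathbb{R}^N$ define $$f(\lambda,\varrho)=\frac{\max\left[0,\ \lambda^T\{t-\mu(\varrho)\}\right]^2}{\lambda^T\Sigma(\varrho)\lambda},\qquad g(\varrho)=\sup_{\lambda\in\Lambda}f(\lambda,\varrho).$$ Then $g$ is a convex function of $\varrho$ on the convex set $\mathcal{C}=\{\varrho\in\mathbb{R}^N:\Sigma(\varrho)\text{ is positive definite}\}$ (on which $g$ is finite).
   Context: There are $I$ strata; stratum $i$ contains $n_i\ge 2$ units, indexed $(i,j)$, $j=1,\dots,n_i$, and $N=\sum_{i=1}^I n_i$. Vectors in $\mathbb{R}^N$ are indexed lexicographically by $(i,j)$. There are $K$ outcomes, and for each unit $(i,j)$ and outcome $k$ there is a fixed real constant $q_{ijk}$. For $\varrho=(\varrho_{ij})\in\mathbb{R}^N$ define $\mu(\varrho)\in\mathbb{R}^K$ and the $K\times K$ matrix $\Sigma(\varrho)$ by $$\mu(\varrho)_k=\sum_{i=1}^I\sum_{j=1}^{n_i}q_{ijk}\varrho_{ij},\qquad \Sigma(\varrho)_{k\ell}=\sum_{i=1}^I\Big\{\sum_{j=1}^{n_i}q_{ijk}q_{ij\ell}\varrho_{ij}-\Big(\sum_{j=1}^{n_i}q_{ijk}\varrho_{ij}\Big)\Big(\sum_{j=1}^{n_i}q_{ij\ell}\varrho_{ij}\Big)\Big\}.$$ *)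

From Stdlib Require Import Reals Lra ClassicalEpsilon.
Open Scope R_scope.

Fixpoint sumR (n : nat) (f : nat -> R) : R :=
  match n with O => 0 | S m => sumR m f + f m end.

(* Strata i < I, units j < n i, outcomes k < K.
   q i j k : constants;  rho i j : the vector in R^N (entries outside range unused). *)
Definition mu (I : nat) (n : nat -> nat) (q : nat -> nat -> nat -> R)
  (rho : nat -> nat -> R) (k : nat) : R :=
  sumR I (fun i => sumR (n i) (fun j => q i j k * rho i j)).

Definition Sigma (I : nat) (n : nat -> nat) (q : nat -> nat -> nat -> R)
  (rho : nat -> nat -> R) (k l : nat) : R :=
  sumR I (fun i =>
    sumR (n i) (fun j => q i j k * q i j l * rho i j)
    - sumR (n i) (fun j => q i j k * rho i j) * sumR (n i) (fun j => q i j l * rho i j)).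

Definition quad (K : nat) (S : nat -> nat -> R) (x : nat -> R) : R :=
  sumR K (fun k => sumR K (fun l => x k * S k l * x l)).

Definition nonzeroK (K : nat) (x : nat -> R) : Prop :=
  exists k, (k < K)%nat /\ x k <> 0.

Definition pos_def (K : nat) (S : nat -> nat -> R) : Prop :=
  forall x : nat -> R, nonzeroK K x -> 0 < quad K S x.

Definition f_obj (I K : nat) (n : nat -> nat) (q : nat -> nat -> nat -> R)
  (t : nat -> R) (lam : nat -> R) (rho : nat -> nat -> R) : R :=
  (Rmax 0 (sumR K (fun k => lam k * (t k - mu I n q rho k)))) ^ 2
  / quad K (Sigma I n q rho) lam.

(* supremum of a set of reals: the least upper bound when the set is
   nonempty and bounded above; 0 otherwise (convention) *)
Definition Rsup (E : R -> Prop) : R :=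
  match excluded_middle_informative (bound E /\ exists x, E x) with
  | left H =>
      proj1_sig (completeness E (proj1 H) (proj2 H))
  | right _ => 0
  end.

Definition fvals (I K : nat) (n : nat -> nat) (q : nat -> nat -> nat -> R)
  (t : nat -> R) (Lam : (nat -> R) -> Prop) (rho : nat -> nat -> R) : R -> Prop :=
  fun y => exists lam, Lam lam /\ y = f_obj I K n q t lam rho.

Definition g_obj (I K : nat) (n : nat -> nat) (q : nat -> nat -> nat -> R)
  (t : nat -> R) (Lam : (nat -> R) -> Prop) (rho : nat -> nat -> R) : R :=
  Rsup (fvals I K n q t Lam rho).

Definition inC (I K : nat) (n : nat -> nat) (q : nat -> nat -> nat -> R)
  (rho : nat -> nat -> R) : Prop :=
  pos_def K (Sigma I n q rho).

Definition cvx_comb (th : R) (x y : nat -> nat -> R) : nat -> nat -> R :=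
  fun i j => th * x i j + (1 - th) * y i j.

From Stdlib Require Import Reals Lra Lia Psatz Classical ClassicalEpsilon.
Open Scope R_scope.

(* For a fixed [lam], both [lam^T {t - mu(rho)}] and [lam^T Sigma(rho) lam] are
   functions of [rho]: the first is affine, the second concave, since the
   convex-combination defect of [Sigma] is a Gram matrix scaled by [th (1 - th)].
   Hence [f(lam, .)] is the quadratic-over-linear function [u^2 / v], which is
   jointly convex for [v > 0], increasing in [u >= 0] and decreasing in [v],
   precomposed with a convex nonnegative numerator and
   a concave positive denominator, so it is convex; a pointwise supremum of convex
   functions is convex.  Finiteness of [g] comes from the Cauchy-Schwarz type
   bound [(lam^T w)^2 <= M lam^T Sigma lam], proved for any positive definite
   form by induction on the dimension through Schur complements. *)

Lemma sumR_ext n f g : (forall i, (i < n)%nat -> f i = g i) -> sumR n f = sumR n g.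
Proof.
  induction n as [|n IH]; simpl; intros H; [reflexivity|].
  rewrite IH, H; [reflexivity|lia|intros; apply H; lia].
Qed.

Lemma sumR_zero n f : (forall i, (i < n)%nat -> f i = 0) -> sumR n f = 0.
Proof.
  intros H; rewrite (sumR_ext n f (fun _ => 0)) by exact H; clear H.
  induction n as [|n IH]; simpl; [reflexivity|]; rewrite IH; ring.
Qed.

Lemma sumR_add n f g : sumR n (fun i => f i + g i) = sumR n f + sumR n g.
Proof. induction n as [|n IH]; simpl; [ring|rewrite IH; ring]. Qed.

Lemma sumR_scal n c f : sumR n (fun i => c * f i) = c * sumR n f.
Proof. induction n as [|n IH]; simpl; [ring|rewrite IH; ring]. Qed.

Lemma sumR_lin n a b f g :
  sumR n (fun i => a * f i + b * g i) = a * sumR n f + b * sumR n g.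
Proof. rewrite sumR_add, !sumR_scal; reflexivity. Qed.

Lemma sumR_nonneg n f : (forall i, (i < n)%nat -> 0 <= f i) -> 0 <= sumR n f.
Proof.
  induction n as [|n IH]; simpl; intros H; [lra|].
  assert (0 <= f n) by (apply H; lia).
  assert (0 <= sumR n f) by (apply IH; intros; apply H; lia).
  lra.
Qed.

Lemma sumR_swap n m F :
  sumR n (fun i => sumR m (fun j => F i j)) = sumR m (fun j => sumR n (fun i => F i j)).
Proof.
  induction n as [|n IH]; simpl.
  - symmetry; apply sumR_zero; reflexivity.
  - rewrite IH, <- sumR_add; reflexivity.
Qed.

Lemma sumR_mul n m f g :
  sumR n (fun i => sumR m (fun j => f i * g j)) = sumR n f * sumR m g.
Proof.
  rewrite (sumR_ext n _ (fun i => sumR m g * f i)).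
  - rewrite sumR_scal; ring.
  - intros; rewrite sumR_scal; ring.
Qed.

Lemma quad_ext K S1 S2 lam :
  (forall k l, S1 k l = S2 k l) -> quad K S1 lam = quad K S2 lam.
Proof.
  intros H; unfold quad; apply sumR_ext; intros; apply sumR_ext; intros.
  rewrite H; reflexivity.
Qed.

Lemma quad_ext_vec K S lam lam' :
  (forall k, (k < K)%nat -> lam k = lam' k) -> quad K S lam = quad K S lam'.
Proof.
  intros H; unfold quad; apply sumR_ext; intros; apply sumR_ext; intros.
  rewrite !H by assumption; reflexivity.
Qed.

Lemma quad_add K S1 S2 lam :
  quad K (fun k l => S1 k l + S2 k l) lam = quad K S1 lam + quad K S2 lam.
Proof.
  unfold quad; rewrite <- sumR_add; apply sumR_ext; intros.
  rewrite <- sumR_add; apply sumR_ext; intros; ring.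
Qed.

Lemma quad_scal K c S lam : quad K (fun k l => c * S k l) lam = c * quad K S lam.
Proof.
  unfold quad; rewrite <- sumR_scal; apply sumR_ext; intros.
  rewrite <- sumR_scal; apply sumR_ext; intros; ring.
Qed.

Lemma quad_rank1 K b lam :
  quad K (fun k l => b k * b l) lam = (sumR K (fun k => b k * lam k)) ^ 2.
Proof.
  unfold quad.
  rewrite (sumR_ext K _ (fun k => sumR K (fun l => (b k * lam k) * (b l * lam l)))).
  - rewrite sumR_mul; ring.
  - intros; apply sumR_ext; intros; ring.
Qed.

Lemma quad_gram_nonneg K I w lam :
  0 <= quad K (fun k l => sumR I (fun i => w i k * w i l)) lam.
Proof.
  unfold quad.
  rewrite (sumR_ext K _
    (fun k => sumR I (fun i => sumR K (fun l => (w i k * lam k) * (w i l * lam l))))).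
  - rewrite sumR_swap; apply sumR_nonneg; intros.
    rewrite sumR_mul; nra.
  - intros; rewrite <- sumR_swap; apply sumR_ext; intros.
    rewrite <- sumR_scal, Rmult_comm, <- sumR_scal.
    apply sumR_ext; intros; ring.
Qed.

Lemma pos_def_quad_nonneg K B lam : pos_def K B -> 0 <= quad K B lam.
Proof.
  intros HB; destruct (classic (nonzeroK K lam)) as [Hnz|Hz]; [left; apply HB, Hnz|].
  right; symmetry; unfold quad; apply sumR_zero; intros k Hk; apply sumR_zero; intros l _.
  assert (lam k = 0) as -> by (apply NNPP; intro; apply Hz; exists k; auto).
  ring.
Qed.

Lemma exists_vec_with_last K (lam : nat -> R) c :
  exists lam', (forall k, (k < K)%nat -> lam' k = lam k) /\ lam' K = c.
Proof.
  exists (fun k => if Nat.eqb k K then c else lam k); split.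
  - intros k Hk; destruct (Nat.eqb_spec k K); [lia|reflexivity].
  - rewrite Nat.eqb_refl; reflexivity.
Qed.

Definition sym_col (K : nat) (B : nat -> nat -> R) (k : nat) : R :=
  (B k K + B K k) / 2.

Definition schur (K : nat) (B : nat -> nat -> R) (k l : nat) : R :=
  B k l - sym_col K B k * sym_col K B l / B K K.

Lemma quad_succ K B lam :
  quad (S K) B lam = quad K B lam
    + 2 * lam K * sumR K (fun k => sym_col K B k * lam k) + B K K * lam K ^ 2.
Proof.
  unfold quad; simpl; rewrite sumR_add.
  assert (sumR K (fun k => lam k * B k K * lam K) + sumR K (fun l => lam K * B K l * lam l)
          = 2 * lam K * sumR K (fun k => sym_col K B k * lam k)).
  { rewrite <- sumR_add, <- sumR_scal; apply sumR_ext; intros; unfold sym_col; field. }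
  lra.
Qed.

Lemma quad_schur K B lam : B K K <> 0 ->
  quad K (schur K B) lam
  = quad K B lam - (sumR K (fun k => sym_col K B k * lam k)) ^ 2 / B K K.
Proof.
  intros Ha.
  rewrite (quad_ext K (schur K B)
             (fun k l => B k l + (- / B K K) * (sym_col K B k * sym_col K B l)))
    by (intros; unfold schur; field; exact Ha).
  rewrite quad_add, quad_scal, quad_rank1; field; exact Ha.
Qed.

Lemma quad_succ_schur K B lam : B K K <> 0 ->
  quad (S K) B lam = quad K (schur K B) lam
    + B K K * (lam K + sumR K (fun k => sym_col K B k * lam k) / B K K) ^ 2.
Proof. intros Ha; rewrite quad_succ, quad_schur by exact Ha; field; exact Ha. Qed.

Lemma pos_def_diag_pos K B : pos_def (S K) B -> 0 < B K K.
Proof.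
  intros HB; destruct (exists_vec_with_last K (fun _ => 0) 1) as [e [He0 He1]].
  assert (Hp : 0 < quad (S K) B e) by (apply HB; exists K; split; [lia|lra]).
  rewrite quad_succ, (quad_ext_vec K B e (fun _ => 0)), He1 in Hp by exact He0.
  rewrite (sumR_zero K (fun k => sym_col K B k * e k)) in Hp
    by (intros; rewrite He0 by assumption; ring).
  unfold quad in Hp; rewrite sumR_zero in Hp
    by (intros; apply sumR_zero; intros; ring).
  lra.
Qed.

Lemma pos_def_schur K B : pos_def (S K) B -> pos_def K (schur K B).
Proof.
  intros HB lam Hnz.
  assert (Ha := pos_def_diag_pos K B HB).
  set (be := sumR K (fun k => sym_col K B k * lam k)).
  destruct (exists_vec_with_last K lam (- be / B K K)) as [lam' [Hlow Hlast]].
  assert (Hp : 0 < quad (S K) B lam').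
  { apply HB; destruct Hnz as [k [Hk Hne]]; exists k; rewrite Hlow by lia; split; [lia|exact Hne]. }
  rewrite quad_succ_schur, (quad_ext_vec K _ lam' lam), Hlast in Hp by (lra || exact Hlow).
  rewrite (sumR_ext K _ (fun k => sym_col K B k * lam k)) in Hp
    by (intros; rewrite Hlow by assumption; reflexivity).
  fold be in Hp.
  replace (- be / B K K + be / B K K) with 0 in Hp by (field; lra).
  lra.
Qed.

Lemma sqr_linear_le_pos_def_quad K B (v : nat -> R) : pos_def K B ->
  exists M, 0 <= M /\
    forall lam, (sumR K (fun k => lam k * v k)) ^ 2 <= M * quad K B lam.
Proof.
  revert B v; induction K as [|K IH]; intros B v HB.
  { exists 0; split; [lra|]; intros; simpl; nra. }
  assert (Ha := pos_def_diag_pos K B HB); set (a := B K K) in *.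
  set (v' := fun k => v k - v K * sym_col K B k / a).
  destruct (IH (schur K B) v' (pos_def_schur K B HB)) as [M [HM0 HM]].
  set (c := v K ^ 2 / a).
  assert (Hc : 0 <= c) by (unfold c, Rdiv; apply Rle_mult_inv_pos; nra).
  exists (2 * M + 2 * c); split; [lra|]; intros lam.
  set (s := lam K + sumR K (fun k => sym_col K B k * lam k) / a).
  assert (Hlin : sumR (S K) (fun k => lam k * v k)
                 = sumR K (fun k => lam k * v' k) + v K * s).
  { simpl; unfold s.
    rewrite (sumR_ext K (fun k => lam k * v' k)
               (fun k => 1 * (lam k * v k) + (- (v K / a)) * (sym_col K B k * lam k)))
      by (intros; unfold v'; field; lra).
    rewrite sumR_lin; field; lra. }
  rewrite Hlin, quad_succ_schur by (fold a; lra); fold a s.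
  assert (HP := pos_def_quad_nonneg K (schur K B) lam (pos_def_schur K B HB)).
  assert (HMl := HM lam).
  set (P := quad K (schur K B) lam) in *.
  set (L := sumR K (fun k => lam k * v' k)) in *.
  assert (Hsq : (L + v K * s) ^ 2 <= 2 * L ^ 2 + 2 * (c * a) * s ^ 2).
  { replace (c * a) with (v K ^ 2) by (unfold c; field; lra).
    assert (0 <= (L - v K * s) ^ 2) by apply pow2_ge_0; nra. }
  assert (0 <= M * (a * s ^ 2)) by (apply Rmult_le_pos; nra).
  assert (0 <= c * P) by (apply Rmult_le_pos; lra).
  nra.
Qed.

Lemma mu_cvx_comb I n q th x y k :
  mu I n q (cvx_comb th x y) k = th * mu I n q x k + (1 - th) * mu I n q y k.
Proof.
  unfold mu; rewrite <- sumR_lin; apply sumR_ext; intros.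
  rewrite <- sumR_lin; apply sumR_ext; intros; unfold cvx_comb; ring.
Qed.

Lemma Sigma_cvx_comb I n q th x y k l :
  let w i k := sumR (n i) (fun j => q i j k * x i j) - sumR (n i) (fun j => q i j k * y i j) in
  Sigma I n q (cvx_comb th x y) k l
  = th * Sigma I n q x k l + (1 - th) * Sigma I n q y k l
    + th * (1 - th) * sumR I (fun i => w i k * w i l).
Proof.
  intros w; unfold Sigma, w.
  rewrite <- sumR_lin, <- sumR_scal, <- sumR_add; apply sumR_ext; intros i _.
  assert (Hcomb : forall h, sumR (n i) (fun j => h j * cvx_comb th x y i j)
            = th * sumR (n i) (fun j => h j * x i j) + (1 - th) * sumR (n i) (fun j => h j * y i j)).
  { intros; rewrite <- sumR_lin; apply sumR_ext; intros; unfold cvx_comb; ring. }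
  rewrite (Hcomb (fun j => q i j k * q i j l)), (Hcomb (fun j => q i j k)),
          (Hcomb (fun j => q i j l)).
  ring.
Qed.

Lemma quad_Sigma_concave I K n q th x y lam : 0 <= th <= 1 ->
  th * quad K (Sigma I n q x) lam + (1 - th) * quad K (Sigma I n q y) lam
  <= quad K (Sigma I n q (cvx_comb th x y)) lam.
Proof.
  intros Hth.
  rewrite (quad_ext K _ _ _ (Sigma_cvx_comb I n q th x y)), !quad_add, !quad_scal.
  assert (Hgram := quad_gram_nonneg K I
    (fun i k => sumR (n i) (fun j => q i j k * x i j) - sumR (n i) (fun j => q i j k * y i j)) lam).
  assert (0 <= th * (1 - th)) by nra.
  nra.
Qed.

Lemma inC_cvx_comb I K n q th x y : 0 <= th <= 1 ->
  inC I K n q x -> inC I K n q y -> inC I K n q (cvx_comb th x y).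
Proof.
  intros Hth Hx Hy lam Hnz.
  assert (Hc := quad_Sigma_concave I K n q th x y lam Hth).
  assert (0 < quad K (Sigma I n q x) lam) by (apply Hx, Hnz).
  assert (0 < quad K (Sigma I n q y) lam) by (apply Hy, Hnz).
  nra.
Qed.

Lemma sqr_div_convex th a b p r : 0 <= th <= 1 -> 0 < p -> 0 < r ->
  (th * a + (1 - th) * b) ^ 2 / (th * p + (1 - th) * r)
  <= th * (a ^ 2 / p) + (1 - th) * (b ^ 2 / r).
Proof.
  intros Hth Hp Hr.
  assert (Hv : 0 < th * p + (1 - th) * r) by nra.
  assert (E : th * (a ^ 2 / p) + (1 - th) * (b ^ 2 / r)
              - (th * a + (1 - th) * b) ^ 2 / (th * p + (1 - th) * r)
              = th * (1 - th) * (a * r - b * p) ^ 2 / (p * r * (th * p + (1 - th) * r)))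
    by (field; lra).
  assert (0 <= th * (1 - th) * (a * r - b * p) ^ 2 / (p * r * (th * p + (1 - th) * r))).
  { unfold Rdiv; apply Rle_mult_inv_pos.
    - apply Rmult_le_pos; [nra|apply pow2_ge_0].
    - apply Rmult_lt_0_compat; [apply Rmult_lt_0_compat|]; lra. }
  lra.
Qed.

Lemma Rmax0_convex th a b : 0 <= th <= 1 ->
  Rmax 0 (th * a + (1 - th) * b) <= th * Rmax 0 a + (1 - th) * Rmax 0 b.
Proof.
  intros Hth; assert (Ha := Rmax_l 0 a); assert (Ha' := Rmax_r 0 a).
  assert (Hb := Rmax_l 0 b); assert (Hb' := Rmax_r 0 b).
  apply Rmax_lub; nra.
Qed.

Lemma f_obj_convex I K n q t lam x y th : 0 <= th <= 1 -> nonzeroK K lam ->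
  inC I K n q x -> inC I K n q y ->
  f_obj I K n q t lam (cvx_comb th x y)
  <= th * f_obj I K n q t lam x + (1 - th) * f_obj I K n q t lam y.
Proof.
  intros Hth Hnz Hx Hy; unfold f_obj.
  rewrite (sumR_ext K _ (fun k => th * (lam k * (t k - mu I n q x k))
                                  + (1 - th) * (lam k * (t k - mu I n q y k))))
    by (intros; rewrite mu_cvx_comb; ring).
  rewrite sumR_lin.
  assert (Hconc := quad_Sigma_concave I K n q th x y lam Hth).
  assert (HQx : 0 < quad K (Sigma I n q x) lam) by (apply Hx, Hnz).
  assert (HQy : 0 < quad K (Sigma I n q y) lam) by (apply Hy, Hnz).
  set (Lx := sumR K (fun k => lam k * (t k - mu I n q x k))).
  set (Ly := sumR K (fun k => lam k * (t k - mu I n q y k))).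
  assert (Hnum := Rmax0_convex th Lx Ly Hth).
  assert (0 <= Rmax 0 (th * Lx + (1 - th) * Ly)) by apply Rmax_l.
  assert (0 < th * quad K (Sigma I n q x) lam + (1 - th) * quad K (Sigma I n q y) lam) by nra.
  eapply Rle_trans; [|apply sqr_div_convex; assumption].
  unfold Rdiv; apply Rmult_le_compat.
  - apply pow2_ge_0.
  - left; apply Rinv_0_lt_compat; lra.
  - apply pow_incr; lra.
  - apply Rinv_le_contravar; lra.
Qed.

Lemma f_obj_le I K n q t lam rho M : nonzeroK K lam -> inC I K n q rho ->
  (sumR K (fun k => lam k * (t k - mu I n q rho k))) ^ 2 <= M * quad K (Sigma I n q rho) lam ->
  f_obj I K n q t lam rho <= M.
Proof.
  intros Hnz Hrho HM; unfold f_obj.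
  assert (HQ : 0 < quad K (Sigma I n q rho) lam) by (apply Hrho, Hnz).
  set (L := sumR K (fun k => lam k * (t k - mu I n q rho k))) in *.
  assert (Rmax 0 L ^ 2 <= L ^ 2) by (unfold Rmax; destruct (Rle_dec 0 L); nra).
  apply (Rmult_le_reg_r _ _ _ HQ); unfold Rdiv.
  rewrite Rmult_assoc, Rinv_l, Rmult_1_r by lra; lra.
Qed.

Lemma fvals_bound I K n q t Lam rho : (forall lam, Lam lam -> nonzeroK K lam) ->
  inC I K n q rho -> bound (fvals I K n q t Lam rho).
Proof.
  intros HLam Hrho.
  destruct (sqr_linear_le_pos_def_quad K (Sigma I n q rho) (fun k => t k - mu I n q rho k) Hrho)
    as [M [_ HM]].
  exists M; intros y [lam [Hl ->]]; apply f_obj_le; auto.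
Qed.

Lemma Rsup_is_lub E : bound E -> (exists x, E x) -> is_lub E (Rsup E).
Proof.
  intros Hb Hne; unfold Rsup; destruct (excluded_middle_informative _) as [H|H].
  - destruct (completeness E (proj1 H) (proj2 H)) as [m Hm]; exact Hm.
  - exfalso; apply H; split; assumption.
Qed.

Lemma Rsup_empty E : ~ (exists x, E x) -> Rsup E = 0.
Proof.
  intros He; unfold Rsup; destruct (excluded_middle_informative _) as [H|H];
    [exfalso; apply He, H | reflexivity].
Qed.

Lemma Rsup_image_convex {A : Type} (P : A -> Prop) (fx fy fz : A -> R) th :
  0 <= th <= 1 ->
  bound (fun v => exists a, P a /\ v = fx a) -> bound (fun v => exists a, P a /\ v = fy a) ->
  (forall a, P a -> fz a <= th * fx a + (1 - th) * fy a) ->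
  Rsup (fun v => exists a, P a /\ v = fz a)
  <= th * Rsup (fun v => exists a, P a /\ v = fx a)
     + (1 - th) * Rsup (fun v => exists a, P a /\ v = fy a).
Proof.
  intros Hth Hbx Hby Hle.
  destruct (classic (exists a, P a)) as [[a0 Ha0]|Hempty].
  2:{ rewrite !Rsup_empty by (intros [v [a [Ha _]]]; apply Hempty; exists a; exact Ha); lra. }
  assert (Hlub : forall f : A -> R, bound (fun v => exists a, P a /\ v = f a) ->
            is_lub (fun v => exists a, P a /\ v = f a) (Rsup (fun v => exists a, P a /\ v = f a)))
    by (intros f Hb; apply Rsup_is_lub; [exact Hb|exists (f a0), a0; auto]).
  destruct (Hlub fx Hbx) as [Hux _]; destruct (Hlub fy Hby) as [Huy _].
  assert (Hupper : is_upper_bound (fun v => exists a, P a /\ v = fz a)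
            (th * Rsup (fun v => exists a, P a /\ v = fx a)
             + (1 - th) * Rsup (fun v => exists a, P a /\ v = fy a))).
  { intros v [a [Ha ->]].
    assert (fx a <= Rsup (fun v => exists a, P a /\ v = fx a)) by (apply Hux; eauto).
    assert (fy a <= Rsup (fun v => exists a, P a /\ v = fy a)) by (apply Huy; eauto).
    specialize (Hle a Ha); nra. }
  apply (Hlub fz (ex_intro _ _ Hupper)), Hupper.
Qed.

Theorem proposition1 (I K : nat) (n : nat -> nat) (q : nat -> nat -> nat -> R)
  (t : nat -> R) (Lam : (nat -> R) -> Prop)
  (hn : forall i, (i < I)%nat -> (2 <= n i)%nat)
  (hLam : forall lam, Lam lam -> nonzeroK K lam) :
  (forall rho, inC I K n q rho -> bound (fvals I K n q t Lam rho)) /\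
  (forall (x y : nat -> nat -> R) (th : R),
     inC I K n q x -> inC I K n q y -> 0 <= th <= 1 ->
     inC I K n q (cvx_comb th x y) /\
     g_obj I K n q t Lam (cvx_comb th x y)
       <= th * g_obj I K n q t Lam x + (1 - th) * g_obj I K n q t Lam y).
Proof.
  split; [intros rho; apply fvals_bound, hLam|].
  intros x y th Hx Hy Hth; split; [apply inC_cvx_comb; assumption|].
  apply Rsup_image_convex; [exact Hth|apply fvals_bound; assumption..|].
  intros lam Hl; apply f_obj_convex; auto.
Qed.
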